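(* Let $\tau$ be a uniformly random permutation of $\{1,\dots,n\}$ and let $S_n$ be the number of steps of the greedy walk from $1$ to $n$ in $G_n$ (as in the context), and $L_n=L_n(\tau)$, $R_n=R_n(\tau)$. Then \[ \mathbb{E}[S_n]=2H_n-2 = 2\log n+2\gamma-2+o(1), \] and \[ \operatorname{Var}(S_n)=2\Bigl(H_n-\sum_{i=1}^n\frac1{i^2}\Bigr)+2\operatorname{Cov}(L_n,R_n)=2\log n+O(1), \] where $H_n=\sum_{i=1}^n 1/i$, $\gamma$ is Euler's constant and $\log$ is the natural logarithm.
   Context: Vertices $V=\{1,\dots,n\}\subset\mathbb{Z}$. A permutation $\tau$ of $V$ gives insertion times: vertex $x$ is inserted at time $\tau(x)$. The undirected graph $G_n$ on $V$ is built as follows: start with no edges; for $t=1,\dots,n$, let $x$ be the vertex with $\tau(x)=t$; if some $y<x$ with $\tau(y)<t$ exists, add an edge between $x$ and the largest such $y$; if some $y>x$ with $\tau(y)<t$ exists, add an edge between $x$ and the smallest such $y$. The greedy walk toward target $n$ starts at $x_0=1$ and, from the current vertex $x\ne n$, moves to the neighbor $y$ of $x$ minimizing $|y-n|$, stopping at $n$; $S_n$ is its number of moves. For a permutation $\sigma$ of $\{1,\dots,n\}$, position $i$ is a left-to-right minimum if $\sigma(i)<\min\{\sigma(1),\dots,\sigma(i-1)\}$ ($i=1$ always is), and a right-to-left minimum if $\sigma(i)<\min\{\sigma(i+1),\dots,\sigma(n)\}$ ($i=n$ always is); $L_n(\sigma)$, $R_n(\sigma)$ count them. *)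

From HB Require Import structures.
From mathcomp Require Import all_boot all_order all_algebra all_fingroup.
From mathcomp Require Import all_classical all_reals all_analysis.
Set Implicit Arguments. Unset Strict Implicit. Unset Printing Implicit Defensive.
Import Order.TTheory GRing.Theory Num.Theory.

(* Vertex k (1 <= k <= n) of the paper is the ordinal (k-1 : 'I_n);
   a permutation s : 'S_n encodes the insertion times: vertex x is inserted
   at time (s x).+1.  Shifting vertices and times by one changes nothing. *)
Section Graph.
Variable n : nat.
Variable s : 'S_n.

Definition left_link (x y : 'I_n) : bool :=
  [&& (val y < val x)%N, (s y < s x)%N &
      [forall z : 'I_n, ((val z < val x)%N && (s z < s x)%N) ==> (val z <= val y)%N]].

Definition right_link (x y : 'I_n) : bool :=
  [&& (val x < val y)%N, (s y < s x)%N &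
      [forall z : 'I_n, ((val x < val z)%N && (s z < s x)%N) ==> (val y <= val z)%N]].

Definition adj (x y : 'I_n) : bool :=
  [|| left_link x y, right_link x y, left_link y x | right_link y x].

(* distance to the target n (vertex index n-1 here): |y - n| *)
Definition dist_target (y : 'I_n) : nat := (n.-1 - val y)%N.

(* greedy step: the neighbour of x minimizing the distance to the target
   (stays put if x has no neighbour, which never happens for n >= 2) *)
Definition greedy_next (x : 'I_n) : 'I_n :=
  match [pick y | adj x y &&
           [forall z : 'I_n, adj x z ==> (dist_target y <= dist_target z)%N]] with
  | Some y => y
  | None => x
  end.

(* number of moves of the greedy walk from x until it reaches the target;
   fuel n suffices since the walk strictly increases *)
Fixpoint greedy_steps (fuel : nat) (x : 'I_n) : nat :=
  match fuel with
  | 0 => 0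
  | f.+1 => if val x == n.-1 then 0 else (greedy_steps f (greedy_next x)).+1
  end.

Definition S_walk : nat :=
  match [pick x : 'I_n | val x == 0%N] with
  | Some x0 => greedy_steps n x0
  | None => 0
  end.

Definition L_min : nat :=
  #|[set i : 'I_n | [forall j : 'I_n, (val j < val i)%N ==> (s i < s j)%N]]|.
Definition R_min : nat :=
  #|[set i : 'I_n | [forall j : 'I_n, (val i < val j)%N ==> (s i < s j)%N]]|.
End Graph.

Local Open Scope ring_scope.

Definition Expect (R : realType) (n : nat) (X : 'S_n -> R) : R :=
  (\sum_(s : 'S_n) X s) / (n`!)%:R.
Definition Var (R : realType) (n : nat) (X : 'S_n -> R) : R :=
  Expect (fun s => (X s - Expect X) ^+ 2).
Definition Cov (R : realType) (n : nat) (X Y : 'S_n -> R) : R :=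
  Expect (fun s => (X s - Expect X) * (Y s - Expect Y)).

Definition Hn (R : realType) (n : nat) : R := \sum_(1 <= i < n.+1) (i%:R)^-1.
Definition Hn2 (R : realType) (n : nat) : R := \sum_(1 <= i < n.+1) (i%:R ^+ 2)^-1.

Definition euler_gamma (R : realType) : R :=
  limn (fun n : nat => Hn R n - ln (n%:R : R)).

(* The greedy walk from vertex 1 visits exactly the records of tau (the
   positions that are left-to-right or right-to-left minima) in increasing
   order: from a record x it follows its right link if some later vertex was
   inserted before x, reaching the next left-to-right minimum, and otherwise
   moves to the earliest inserted later vertex, the next right-to-left minimum.
   Only the position of the smallest value is a minimum of both kinds, hence
   S_n = L_n + R_n - 2.
   A uniform permutation of n+1 arises by inserting the largest value at a
   uniform position p of a uniform permutation of n; this creates a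
   left-to-right minimum iff p is first, a right-to-left minimum iff p is last,
   and leaves all other minima unchanged.  The resulting recursion for
   E[F(L_n, R_n)] yields E L_n = H_n, E L_n^2 = H_n^2 + H_n - H^(2)_n and
   E L_n R_n = H_n^2 + 1 - H^(2)_n, and the same for R_n by symmetry.  The
   asymptotics follow from H_n - log n decreasing to gamma and
   1 <= H^(2)_n <= 2. *)

From HB Require Import structures.
From mathcomp Require Import all_boot all_order all_algebra all_fingroup.
From mathcomp Require Import all_classical all_reals all_analysis.
From mathcomp Require Import zify ring lra.
Import Order.TTheory GRing.Theory Num.Theory numFieldNormedType.Exports.

Set Implicit Arguments.
Unset Strict Implicit.
Unset Printing Implicit Defensive.

Section Records.
Variables (n : nat) (s : 'S_n).

Definition lr_min (i : 'I_n) := [forall j : 'I_n, (val j < val i)%N ==> (s i < s j)%N].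
Definition rl_min (i : 'I_n) := [forall j : 'I_n, (val i < val j)%N ==> (s i < s j)%N].
Definition is_record (i : 'I_n) := lr_min i || rl_min i.

Lemma lr_minP (i : 'I_n) : reflect (forall j : 'I_n, (j < i)%N -> (s i < s j)%N) (lr_min i).
Proof. by apply: (iffP forallP) => h j; [move=> ji; apply: (implyP (h j)) | apply/implyP/h]. Qed.

Lemma rl_minP (i : 'I_n) : reflect (forall j : 'I_n, (i < j)%N -> (s i < s j)%N) (rl_min i).
Proof. by apply: (iffP forallP) => h j; [move=> ij; apply: (implyP (h j)) | apply/implyP/h]. Qed.

Lemma perm_val_inj (a b : 'I_n) : (s a : nat) = s b <-> (a : nat) = b.
Proof. by split=> [/val_inj/perm_inj -> | /val_inj ->]. Qed.

Lemma greedy_nextE (x y : 'I_n) : adj s x y ->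
  (forall z, adj s x z -> (z <= y)%N) -> greedy_next s x = y.
Proof.
rewrite /greedy_next /dist_target => axy ymax.
have nearest z : adj s x z -> (n.-1 - y <= n.-1 - z)%N.
  by move=> /ymax; have := ltn_ord y; have := ltn_ord z; lia.
case: pickP => [y' /andP[axy' /forallP y'min] | none].
  apply: val_inj; move: (implyP (y'min y) axy) (ymax _ axy') => /=.
  by have := ltn_ord y; have := ltn_ord y'; lia.
have := none y; rewrite axy /= => /negP[]; apply/forallP => z.
by apply/implyP/nearest.
Qed.

Lemma greedy_next_drop (x y : 'I_n) : (x < y)%N -> (s y < s x)%N ->
  (forall z : 'I_n, (x < z < y)%N -> (s x < s z)%N) -> greedy_next s x = y.
Proof.
move=> xy syx gap; apply: greedy_nextE.
  apply/or4P; apply: Or42; apply/and3P; split=> //; apply/forallP => z.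
  apply/implyP => /andP[xz szx]; rewrite leqNgt; apply/negP => zy.
  by have := gap z; rewrite xz zy; lia.
move=> z /or4P[] /and3P[] /= zx szx /forallP zmin; try lia.
- by apply: (implyP (zmin y)); rewrite xy syx.
- rewrite leqNgt; apply/negP => yz.
  by have := implyP (zmin y); rewrite yz /=; lia.
Qed.

Lemma greedy_next_rise (x y : 'I_n) : (x < y)%N ->
  (forall z : 'I_n, (x < z)%N -> (s x < s z)%N) ->
  (forall z : 'I_n, (x < z)%N -> (s y <= s z)%N) -> greedy_next s x = y.
Proof.
move=> xy xrise ymin; apply: greedy_nextE.
  apply/or4P; apply: Or43; apply/and3P; split=> //; first exact: xrise.
  apply/forallP => w; apply/implyP => /andP[wy swy]; rewrite leqNgt.
  by apply/negP => xw; have := ymin w xw; lia.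
move=> z /or4P[] /and3P[] /= zx szx /forallP zmin; try lia.
- by have := xrise z zx; lia.
- rewrite leqNgt; apply/negP => yz.
  have := implyP (zmin y); rewrite yz /=.
  by have := ymin z zx; have := @perm_val_inj y z; lia.
Qed.

Definition first_record_after (x y : 'I_n) :=
  [/\ (x < y)%N, is_record y & forall w : 'I_n, (x < w < y)%N -> ~~ is_record w].

Lemma first_record_after_drop (x y : 'I_n) : lr_min x -> (x < y)%N -> (s y < s x)%N ->
  (forall z : 'I_n, (x < z < y)%N -> (s x < s z)%N) -> first_record_after x y.
Proof.
move=> /lr_minP xlr xy syx gap; split=> //.
  apply/orP; left; apply/lr_minP => j jy.
  by have := xlr j; have := gap j; have := @perm_val_inj j x; lia.
move=> w /andP[xw wy]; have := gap w; rewrite xw wy => /(_ isT) sxw.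
by apply/norP; split; [apply/lr_minP => /(_ x xw) | apply/rl_minP => /(_ y wy)]; lia.
Qed.

Lemma first_record_after_rise (x y : 'I_n) : (x < y)%N ->
  (forall z : 'I_n, (x < z)%N -> (s x < s z)%N) ->
  (forall z : 'I_n, (x < z)%N -> (s y <= s z)%N) -> first_record_after x y.
Proof.
move=> xy xrise ymin; split=> //.
  apply/orP; right; apply/rl_minP => j yj.
  by have := ymin j; have := @perm_val_inj j y; lia.
move=> w /andP[xw wy]; have := xrise w xw; have := ymin w xw => syw sxw.
by apply/norP; split; [apply/lr_minP => /(_ x xw) | apply/rl_minP => /(_ y wy)]; lia.
Qed.

Lemma greedy_next_record (x : 'I_n) : is_record x -> (x < n.-1)%N ->
  first_record_after x (greedy_next s x).
Proof.
move=> xrec xlast.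
have [/existsP[z0 xz0] | /existsPn xrise] :=
  boolP [exists z : 'I_n, (x < z)%N && (s z < s x)%N].
- have [y /andP[xy syx] ymin] :=
    @arg_minnP _ z0 (fun z => (x < z)%N && (s z < s x)%N) (fun z => nat_of_ord z) xz0.
  have gap (z : 'I_n) : (x < z < y)%N -> (s x < s z)%N.
    move=> /andP[xz zy]; rewrite ltnNge; apply/negP => szx.
    by have := ymin z; have := @perm_val_inj z x; lia.
  have xlr : lr_min x by case/orP: xrec => // /rl_minP/(_ y xy); lia.
  by rewrite (greedy_next_drop xy syx gap); apply: first_record_after_drop.
- have {}xrise (z : 'I_n) : (x < z)%N -> (s x < s z)%N.
    move=> xz; have := xrise z; rewrite xz /= -leqNgt.
    by have := @perm_val_inj z x; lia.
  have nlast : (n.-1 < n)%N by have := ltn_ord x; lia.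
  have x_lt_last : (x < Ordinal nlast)%N by [].
  have [y xy ymin] :=
    @arg_minnP _ _ (fun z : 'I_n => (x < z)%N) (fun z => nat_of_ord (s z)) x_lt_last.
  by rewrite (greedy_next_rise xy xrise ymin); apply: first_record_after_rise.
Qed.

Definition records_above (x : 'I_n) := #|[set v | is_record v && (x < v)%N]|.

Lemma greedy_steps_records f (x : 'I_n) : is_record x -> (records_above x < f)%N ->
  greedy_steps s f x = records_above x.
Proof.
elim: f x => [//|f IH] x xrec /=.
case: eqP => [xlast _ | /eqP xlast].
  apply/esym/eqP; rewrite cards_eq0; apply/eqP/setP => v; rewrite !inE.
  by apply/negbTE/nandP; right; have := ltn_ord v; rewrite -ltnNge; lia.
have xlt : (x < n.-1)%N by have := ltn_ord x; lia.
have [xy yrec gap] := greedy_next_record xrec xlt.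
set y := greedy_next s x in xy yrec gap *.
have above_x : [set v | is_record v && (x < v)%N] =
                y |: [set v | is_record v && (y < v)%N].
  apply/setP => v; rewrite !inE.
  case: (eqVneq v y) => [-> | vy] /=; first by rewrite yrec xy.
  case vrec: (is_record v) => //=.
  have vy' : (v : nat) <> y by move/val_inj => vE; rewrite vE eqxx in vy.
  apply/idP/idP => [xv | /(ltn_trans xy)//]; rewrite ltnNge; apply/negP => vley.
  have vgap : (x < v < y)%N by rewrite xv /=; lia.
  by have := gap v vgap; rewrite vrec.
have -> : records_above x = (records_above y).+1.
  by rewrite /records_above above_x cardsU1 inE ltnn andbF.
by move=> fbig; rewrite IH.
Qed.

Lemma card_lr_min_rl_min : (0 < n)%N ->
  #|[set i | lr_min i] :&: [set i | rl_min i]| = 1%N.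
Proof.
move=> n_gt0; set m := (s^-1)%g (Ordinal n_gt0).
have sm : (s m : nat) = 0%N by rewrite permKV.
rewrite -(cards1 m); apply: eq_card => v; rewrite !inE; apply/andP/eqP.
  move=> [/lr_minP vlr /rl_minP vrl]; apply: val_inj.
  by case: (ltngtP v m) => // [/vrl | /vlr]; lia.
move=> ->; split; [apply/lr_minP | apply/rl_minP] => j jm;
  by have := @perm_val_inj j m; lia.
Qed.

Lemma L_minE : L_min s = #|[set i | lr_min i]|. Proof. by []. Qed.
Lemma R_minE : R_min s = #|[set i | rl_min i]|. Proof. by []. Qed.

Lemma S_walk_minima : (0 < n)%N -> (S_walk s + 2 = L_min s + R_min s)%N.
Proof.
move=> n_gt0; rewrite /S_walk; case: pickP => [x0 /eqP x0_0 | none]; last first.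
  by have := none (Ordinal n_gt0).
have x0rec : is_record x0 by apply/orP; left; apply/lr_minP => j; rewrite x0_0.
have records_x0 : [set v | is_record v] = x0 |: [set v | is_record v && (x0 < v)%N].
  apply/setP => v; rewrite !inE; case: (eqVneq v x0) => [-> | vx0] /=; first by rewrite x0rec.
  suff -> : (x0 < v)%N by rewrite andbT.
  by rewrite x0_0 lt0n; apply: contra vx0 => /eqP v0; apply/eqP/val_inj; rewrite /= v0.
have above_small : (records_above x0 < n)%N.
  suff : (records_above x0 <= #|predC1 x0|)%N by rewrite cardC1 card_ord; lia.
  apply/subset_leq_card/fintype.subsetP => v; rewrite !inE.
  by apply: contraTneq => ->; rewrite ltnn andbF.
rewrite greedy_steps_records // L_minE R_minE -cardsUI card_lr_min_rl_min //.
rewrite (_ : _ :|: _ = [set v | is_record v]); last by apply/setP => v; rewrite !inE.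
by rewrite records_x0 cardsU1 inE ltnn andbF -/(records_above x0) /=; lia.
Qed.

End Records.

Lemma card_set_sum (T : finType) (P : pred T) : #|[set x | P x]| = (\sum_x P x)%N.
Proof. by rewrite -sum1dep_card big_mkcond. Qed.

Lemma sum_perm_insert_max (V : nmodType) n (F : 'S_n.+1 -> V) :
  (\sum_(t : 'S_n.+1) F t = \sum_(p < n.+1) \sum_(s : 'S_n) F (lift_perm p ord_max s))%R.
Proof.
pose insert_max (ps : 'I_n.+1 * 'S_n) := lift_perm ps.1 ord_max ps.2.
have insert_inj : injective insert_max.
  move=> [p s] [q t]; rewrite /insert_max /= => eq_ins.
  have pq : p = q.
    by apply: (@perm_inj _ (lift_perm p ord_max s)); rewrite lift_perm_id eq_ins lift_perm_id.
  subst q; congr (_, _); apply/permP => k; apply: (@lift_inj _ ord_max).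
  by rewrite -(lift_perm_lift p) eq_ins lift_perm_lift.
have insert_bij : bijective insert_max.
  by apply: (@inj_card_bij _ _ _ insert_inj); rewrite card_prod card_ord !card_Sn factS.
by rewrite pair_big /= (reindex insert_max) //; apply: onW_bij.
Qed.

Lemma ltn_lift n (p : 'I_n.+1) (a b : 'I_n) : (lift p a < lift p b)%N = (a < b)%N.
Proof. by rewrite /= !ltnNge leq_bump2. Qed.

Section InsertMax.
Variables (n : nat) (s : 'S_n) (p : 'I_n.+1).
Let t := lift_perm p ord_max s.

Lemma insert_max_lift k : (t (lift p k) : nat) = s k.
Proof. by rewrite lift_perm_lift lift_max. Qed.

Lemma lr_min_insert_lift k : lr_min t (lift p k) = lr_min s k.
Proof.
apply/lr_minP/lr_minP => tmin j.
  by move=> jk; have := tmin (lift p j); rewrite ltn_lift !insert_max_lift; apply.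
case: (unliftP p j) => [j'|] -> jk; last by rewrite lift_perm_id insert_max_lift.
by rewrite !insert_max_lift; apply: tmin; rewrite -(ltn_lift p).
Qed.

Lemma rl_min_insert_lift k : rl_min t (lift p k) = rl_min s k.
Proof.
apply/rl_minP/rl_minP => tmin j.
  by move=> kj; have := tmin (lift p j); rewrite ltn_lift !insert_max_lift; apply.
case: (unliftP p j) => [j'|] -> kj; last by rewrite lift_perm_id insert_max_lift.
by rewrite !insert_max_lift; apply: tmin; rewrite -(ltn_lift p).
Qed.

Lemma lr_min_insert_max : lr_min t p = (p == ord0).
Proof.
apply/lr_minP/eqP => [tmin | ->] //; apply/val_inj/eqP; rewrite -leqn0 leqNgt.
by apply/negP => /(tmin ord0); rewrite lift_perm_id ltnNge -ltnS ltn_ord.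
Qed.

Lemma rl_min_insert_max : rl_min t p = (p == ord_max).
Proof.
apply/rl_minP/eqP => [tmin | -> j] /=; last by have := ltn_ord j; lia.
apply/val_inj/eqP; rewrite /= eqn_leq -ltnS ltn_ord /= leqNgt.
by apply/negP => /(tmin ord_max); rewrite lift_perm_id ltnNge -ltnS ltn_ord.
Qed.

Lemma L_min_insert_max : L_min t = (L_min s + (p == ord0))%N.
Proof.
rewrite !L_minE !card_set_sum (bigD1_ord p) //= lr_min_insert_max addnC.
by congr (_ + _)%N; apply: eq_bigr => k _; rewrite lr_min_insert_lift.
Qed.

Lemma R_min_insert_max : R_min t = (R_min s + (p == ord_max))%N.
Proof.
rewrite !R_minE !card_set_sum (bigD1_ord p) //= rl_min_insert_max addnC.
by congr (_ + _)%N; apply: eq_bigr => k _; rewrite rl_min_insert_lift.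
Qed.
End InsertMax.

Local Open Scope ring_scope.

Lemma sum_ord_ends (V : nmodType) k (G : bool -> bool -> V) :
  \sum_(p < k.+2) G (p == ord0) (p == ord_max) = G true false + G false true + G false false *+ k.
Proof.
rewrite big_ord_recl big_ord_recr /= eqxx !lift_eqF.
have -> : (lift ord0 ord_max == ord_max :> 'I_k.+2) by apply/eqP/val_inj.
rewrite (eq_bigr (fun _ => G false false)) => [|i _]; last first.
  by rewrite lift_eqF; congr G; apply/negbTE; rewrite -val_eqE /= eqSS neq_ltn ltn_ord.
by rewrite sumr_const card_ord [_ *+ k + _]addrC addrA.
Qed.

Section Expectation.
Variables (R : realType) (n : nat).
Implicit Types (X Y : 'S_n -> R) (c : R).

Lemma eq_Expect X Y : X =1 Y -> Expect X = Expect Y.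
Proof. by move=> XY; rewrite /Expect; under eq_bigr do rewrite XY. Qed.

Lemma ExpectD X Y : Expect (fun s => X s + Y s) = Expect X + Expect Y.
Proof. by rewrite /Expect big_split mulrDl. Qed.

Lemma ExpectB X Y : Expect (fun s => X s - Y s) = Expect X - Expect Y.
Proof. by rewrite /Expect sumrB mulrBl. Qed.

Lemma ExpectZ c X : Expect (fun s => c * X s) = c * Expect X.
Proof. by rewrite /Expect -mulr_sumr mulrA. Qed.

Lemma Expect_cst c : Expect (fun _ : 'S_n => c) = c.
Proof. by rewrite /Expect sumr_const card_Sn -[c *+ _]mulr_natr mulfK. Qed.

Lemma VarE X : Var X = Expect (fun s => X s ^+ 2) - Expect X ^+ 2.
Proof.
rewrite /Var; set m := Expect X.
rewrite (@eq_Expect _ (fun s => X s ^+ 2 - (2 * m) * X s + m ^+ 2)) => [|s]; last by ring.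
by rewrite ExpectD ExpectB ExpectZ Expect_cst -/m; ring.
Qed.

Lemma CovE X Y : Cov X Y = Expect (fun s => X s * Y s) - Expect X * Expect Y.
Proof.
rewrite /Cov; set mX := Expect X; set mY := Expect Y.
rewrite (@eq_Expect _ (fun s => X s * Y s - (mY * X s + mX * Y s) + mX * mY)) => [|s]; last by ring.
by rewrite ExpectD ExpectB ExpectD Expect_cst !ExpectZ -/mX -/mY; ring.
Qed.

Lemma VarD X Y : Var (fun s => X s + Y s) = Var X + Var Y + 2 * Cov X Y.
Proof.
rewrite !VarE CovE ExpectD.
rewrite (@eq_Expect _ (fun s => X s ^+ 2 + Y s ^+ 2 + 2 * (X s * Y s))) => [|s]; last by ring.
by rewrite !ExpectD ExpectZ; ring.
Qed.

Lemma Var_shift X c : Var (fun s => X s + c) = Var X.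
Proof.
rewrite /Var ExpectD Expect_cst; apply: eq_Expect => s.
by rewrite opprD addrACA subrr addr0.
Qed.
End Expectation.

Section Harmonic.
Variable R : realType.

Lemma HnS n : Hn R n.+1 = Hn R n + n.+1%:R^-1.
Proof. by rewrite /Hn big_nat_recr. Qed.

Lemma Hn2S n : Hn2 R n.+1 = Hn2 R n + (n.+1%:R ^+ 2)^-1.
Proof. by rewrite /Hn2 big_nat_recr. Qed.

Lemma Hn1 : Hn R 1 = 1.
Proof. by rewrite /Hn big_nat1 invr1. Qed.

Lemma Hn21 : Hn2 R 1 = 1.
Proof. by rewrite /Hn2 big_nat1 expr1n invr1. Qed.
End Harmonic.

Section Minima.
Variable R : realType.

Definition expect_minima n (F : nat -> nat -> R) :=
  Expect (fun s : 'S_n => F (L_min s) (R_min s)).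

Lemma expect_minimaD n F G :
  expect_minima n (fun a b => F a b + G a b) = expect_minima n F + expect_minima n G.
Proof. exact: ExpectD. Qed.

Lemma expect_minimaZ n c F : expect_minima n (fun a b => c * F a b) = c * expect_minima n F.
Proof. exact: ExpectZ. Qed.

Lemma expect_minima_cst n c : expect_minima n (fun _ _ => c) = c.
Proof. exact: Expect_cst. Qed.

Lemma expect_minima1 F : expect_minima 1 F = F 1%N 1%N.
Proof.
rewrite -[RHS](expect_minima_cst 1); apply: eq_Expect => t.
have all_min (P : 'I_1 -> bool) : (forall i, P i) -> #|[set i | P i]| = 1%N.
  by move=> PT; rewrite (eq_card (B := 'I_1)) ?card_ord // => i; rewrite inE PT.
by rewrite L_minE R_minE !all_min // => i; apply/forallP => j; rewrite !ord1 ltnn.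
Qed.

Lemma expect_minima_insert n F : expect_minima n.+2 F =
  (expect_minima n.+1 (fun a b => F a.+1 b) + expect_minima n.+1 (fun a b => F a b.+1)
   + n%:R * expect_minima n.+1 F) / n.+2%:R.
Proof.
rewrite {1}/expect_minima /Expect sum_perm_insert_max.
under eq_bigr => p _ do under eq_bigr => s _ do rewrite L_min_insert_max R_min_insert_max.
rewrite (sum_ord_ends n (fun x y => \sum_(s : 'S_n.+1) F (L_min s + x)%N (R_min s + y)%N)) /=.
under [X in X + _ + _]eq_bigr do rewrite addn1 addn0.
under [X in _ + X + _]eq_bigr do rewrite addn0 addn1.
under [X in X *+ _]eq_bigr do rewrite !addn0.
rewrite /expect_minima /Expect factS natrM -mulr_natl.
have := fact_gt0 n.+1; rewrite -(ltr0n R) => /lt0r_neq0 fact_neq0.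
field; rewrite fact_neq0 andbT; apply: lt0r_neq0; have := ler0n R n; lra.
Qed.

Lemma expect_minima_succ n F dL dR :
  (forall a b, F a.+1 b = F a b + dL a b) -> (forall a b, F a b.+1 = F a b + dR a b) ->
  expect_minima n.+2 F =
  expect_minima n.+1 F + (expect_minima n.+1 dL + expect_minima n.+1 dR) / n.+2%:R.
Proof.
move=> FdL FdR; rewrite expect_minima_insert.
rewrite (_ : (fun a b => F a.+1 b) = (fun a b => F a b + dL a b)); last first.
  by apply/funext => a; apply/funext => b; rewrite FdL.
rewrite (_ : (fun a b => F a b.+1) = (fun a b => F a b + dR a b)); last first.
  by apply/funext => a; apply/funext => b; rewrite FdR.
rewrite !expect_minimaD.
by field; apply: lt0r_neq0; have := ler0n R n; lra.
Qed.

Lemma expect_minima_swap n F :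
  expect_minima n.+1 F = expect_minima n.+1 (fun a b => F b a).
Proof.
elim: n F => [|n IH] F; first by rewrite !expect_minima1.
rewrite (@expect_minima_succ n F (fun a b => F a.+1 b - F a b)
                                 (fun a b => F a b.+1 - F a b)) => [|a b|a b]; try ring.
rewrite (@expect_minima_succ n (fun a b => F b a) (fun a b => F b a.+1 - F b a)
                                 (fun a b => F b.+1 a - F b a)) => [|a b|a b]; try ring.
by congr (_ + _ / _); [exact: IH | rewrite addrC; congr (_ + _); exact: IH].
Qed.

Lemma expect_minima_L n : expect_minima n.+1 (fun a _ => a%:R) = Hn R n.+1.
Proof.
elim: n => [|n IH]; first by rewrite expect_minima1 Hn1.
rewrite (@expect_minima_succ n _ (fun _ _ => 1) (fun _ _ => 0)) => [|a b|a b] /=.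
- by rewrite !expect_minima_cst IH (HnS _ n.+1) addr0 mul1r.
- by rewrite natr1.
- by rewrite addr0.
Qed.

Lemma expect_minima_R n : expect_minima n.+1 (fun _ b => b%:R) = Hn R n.+1.
Proof. by rewrite expect_minima_swap expect_minima_L. Qed.

Lemma expect_minima_L2 n :
  expect_minima n.+1 (fun a _ => a%:R ^+ 2) = Hn R n.+1 ^+ 2 + Hn R n.+1 - Hn2 R n.+1.
Proof.
elim: n => [|n IH]; first by rewrite expect_minima1 Hn1 Hn21 expr1n addrK.
rewrite (@expect_minima_succ n _ (fun a _ => 2 * a%:R + 1) (fun _ _ => 0)) => [|a b|a b] /=.
- rewrite expect_minimaD expect_minimaZ !expect_minima_cst expect_minima_L IH.
  rewrite (HnS _ n.+1) (Hn2S _ n.+1).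
  have : n.+2%:R != 0 :> R by rewrite pnatr_eq0.
  by move: (n.+2%:R : R) => k k_neq0; field.
- by rewrite -natr1; ring.
- by rewrite addr0.
Qed.

Lemma expect_minima_R2 n :
  expect_minima n.+1 (fun _ b => b%:R ^+ 2) = Hn R n.+1 ^+ 2 + Hn R n.+1 - Hn2 R n.+1.
Proof. by rewrite expect_minima_swap expect_minima_L2. Qed.

Lemma expect_minima_LR n :
  expect_minima n.+1 (fun a b => a%:R * b%:R) = Hn R n.+1 ^+ 2 + 1 - Hn2 R n.+1.
Proof.
elim: n => [|n IH]; first by rewrite expect_minima1 Hn1 Hn21 mulr1 expr1n addrK.
rewrite (@expect_minima_succ n _ (fun _ b => b%:R) (fun a _ => a%:R)) => [|a b|a b] /=.
- rewrite expect_minima_L expect_minima_R IH (HnS _ n.+1) (Hn2S _ n.+1).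
  have : n.+2%:R != 0 :> R by rewrite pnatr_eq0.
  by move: (n.+2%:R : R) => k k_neq0; field.
- by rewrite -natr1; ring.
- by rewrite -natr1; ring.
Qed.
End Minima.

Section WalkMoments.
Variables (R : realType) (n : nat).

Lemma S_walkE (s : 'S_n.+1) : (S_walk s)%:R = (L_min s)%:R + (R_min s)%:R - 2 :> R.
Proof. by rewrite -natrD -(S_walk_minima s) // natrD addrK. Qed.

Lemma Expect_L_min : Expect (fun s : 'S_n.+1 => (L_min s)%:R : R) = Hn R n.+1.
Proof. exact: expect_minima_L. Qed.

Lemma Expect_R_min : Expect (fun s : 'S_n.+1 => (R_min s)%:R : R) = Hn R n.+1.
Proof. exact: expect_minima_R. Qed.

Lemma Var_L_min : Var (fun s : 'S_n.+1 => (L_min s)%:R : R) = Hn R n.+1 - Hn2 R n.+1.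
Proof.
rewrite VarE Expect_L_min.
by have := expect_minima_L2 R n; rewrite /expect_minima /= => ->; ring.
Qed.

Lemma Var_R_min : Var (fun s : 'S_n.+1 => (R_min s)%:R : R) = Hn R n.+1 - Hn2 R n.+1.
Proof.
rewrite VarE Expect_R_min.
by have := expect_minima_R2 R n; rewrite /expect_minima /= => ->; ring.
Qed.

Lemma Cov_L_min_R_min :
  Cov (fun s : 'S_n.+1 => (L_min s)%:R : R) (fun s => (R_min s)%:R) = 1 - Hn2 R n.+1.
Proof.
rewrite CovE Expect_L_min Expect_R_min.
by have := expect_minima_LR R n; rewrite /expect_minima /= => ->; ring.
Qed.

Lemma Expect_S_walk : Expect (fun s : 'S_n.+1 => (S_walk s)%:R : R) = 2 * Hn R n.+1 - 2.
Proof.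
rewrite (eq_Expect S_walkE) ExpectB ExpectD Expect_cst Expect_L_min Expect_R_min.
by ring.
Qed.

Lemma Var_S_walk : Var (fun s : 'S_n.+1 => (S_walk s)%:R : R) =
  2 * (Hn R n.+1 - Hn2 R n.+1)
  + 2 * Cov (fun s : 'S_n.+1 => (L_min s)%:R : R) (fun s => (R_min s)%:R).
Proof.
have -> : (fun s : 'S_n.+1 => (S_walk s)%:R : R) = (fun s => (L_min s)%:R + (R_min s)%:R - 2).
  by apply/funext => s; exact: S_walkE.
by rewrite Var_shift VarD Var_L_min Var_R_min; ring.
Qed.
End WalkMoments.

Local Open Scope classical_set_scope.

Section Gamma.
Variable R : realType.

Lemma ln_le_subr1 (x : R) : 0 < x -> ln x <= x - 1.
Proof. by move=> x_gt0; have := @le_ln1Dx R (x - 1); rewrite [1 + _]addrC subrK; apply; lra. Qed.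

Lemma ln_subr_bounds (x y : R) : 0 < x -> 0 < y -> 1 - x / y <= ln y - ln x <= y / x - 1.
Proof.
move=> x_gt0 y_gt0; rewrite -ln_div ?posrE //.
have := ln_le_subr1 (divr_gt0 x_gt0 y_gt0); have := ln_le_subr1 (divr_gt0 y_gt0 x_gt0).
by rewrite !ln_div ?posrE // => ub lb; apply/andP; split; lra.
Qed.

Lemma ln_succ_bounds k :
  (k.+2%:R : R)^-1 <= ln (k.+2%:R : R) - ln (k.+1%:R : R) <= (k.+1%:R : R)^-1.
Proof.
have := @ln_subr_bounds k.+1%:R k.+2%:R; rewrite !ltr0n => /(_ isT isT).
rewrite -[k.+2%:R]natr1; have : (0 : R) < k.+1%:R by rewrite ltr0n.
move: (k.+1%:R : R) => x x_gt0.
have -> : 1 - x / (x + 1) = (x + 1)^-1 by field; apply: lt0r_neq0; lra.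
by have -> : (x + 1) / x - 1 = x^-1 by field; apply: lt0r_neq0.
Qed.

Lemma Hn_ge_ln k : ln (k.+1%:R : R) <= Hn R k.
Proof.
elim: k => [|k IH]; first by rewrite ln1 /Hn big_geq.
rewrite HnS -(subrK (ln (k.+1%:R : R)) (ln k.+2%:R)) addrC.
by apply: lerD IH _; case/andP: (ln_succ_bounds k).
Qed.

Definition harmonic_gap n := Hn R n - ln (n%:R : R).

Lemma harmonic_gap_succ_le k : harmonic_gap k.+2 <= harmonic_gap k.+1.
Proof.
rewrite /harmonic_gap (HnS _ k.+1) -addrA lerD2l lerBlDr addrC.
by case/andP: (ln_succ_bounds k).
Qed.

Lemma harmonic_gap_ge0 k : 0 <= harmonic_gap k.+1.
Proof.
have : ln (k.+1%:R : R) <= ln k.+2%:R by rewrite ler_ln ?posrE ?ltr0n // ler_nat.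
by rewrite /harmonic_gap; have := Hn_ge_ln k.+1; lra.
Qed.

Lemma harmonic_gap_le1 k : harmonic_gap k.+1 <= 1.
Proof.
elim: k => [|k IH]; first by rewrite /harmonic_gap Hn1 ln1 subr0.
exact: le_trans (harmonic_gap_succ_le k) IH.
Qed.

Lemma harmonic_gap_cvg : harmonic_gap @ \oo --> euler_gamma R.
Proof.
have gap_noninc : nonincreasing_seq (fun n => harmonic_gap n.+1).
  by apply/nonincreasing_seqP => n; exact: harmonic_gap_succ_le.
have gap_lbound : has_lbound (range (fun n => harmonic_gap n.+1)).
  by exists 0 => _ [n _ <-]; exact: harmonic_gap_ge0.
have gap_cvg : harmonic_gap @ \oo --> inf (range (fun n => harmonic_gap n.+1)).
  by rewrite -cvg_shiftS; exact: nonincreasing_cvgn.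
suff -> : euler_gamma R = inf (range (fun n => harmonic_gap n.+1)) by [].
exact: cvg_lim gap_cvg.
Qed.

Lemma Hn2_ge1 k : 1 <= Hn2 R k.+1.
Proof.
elim: k => [|k IH]; first by rewrite Hn21.
by rewrite Hn2S; apply: le_trans IH _; rewrite lerDl invr_ge0 exprn_ge0.
Qed.

Lemma Hn2_le2 k : Hn2 R k.+1 <= 2.
Proof.
suff : Hn2 R k.+1 <= 2 - k.+1%:R^-1 by move/le_trans; apply; rewrite gerBl invr_ge0.
elim: k => [|k IH]; first by rewrite Hn21 invr1; lra.
(* telescoping: 1 / (k+2)^2 <= 1 / (k+1) - 1 / (k+2) *)
rewrite Hn2S -[k.+2%:R]natr1; have : (0 : R) < k.+1%:R by rewrite ltr0n.
move: IH; move: (k.+1%:R : R) => x IH x_gt0.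
suff : ((x + 1) ^+ 2)^-1 <= x^-1 - (x + 1)^-1 by lra.
have -> : x^-1 - (x + 1)^-1 = (x * (x + 1))^-1.
  by field; apply/andP; split; apply: lt0r_neq0; lra.
by rewrite lef_pV2 ?posrE ?mulr_gt0 ?exprn_gt0 ?expr2 ?ler_wpM2r //; lra.
Qed.
End Gamma.

Theorem theorem2 (R : realType) :
  [/\ (forall n : nat, (0 < n)%N ->
         Expect (fun s : 'S_n => (S_walk s)%:R : R) = 2 * Hn R n - 2),
      (fun n : nat => Expect (fun s : 'S_n => (S_walk s)%:R : R)
          - (2 * ln (n%:R : R) + 2 * euler_gamma R - 2)) @ \oo --> (0 : R),
      (forall n : nat, (0 < n)%N ->
         Var (fun s : 'S_n => (S_walk s)%:R : R)
         = 2 * (Hn R n - Hn2 R n)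
           + 2 * Cov (fun s : 'S_n => (L_min s)%:R : R) (fun s => (R_min s)%:R))
    & exists C : R, forall n : nat, (0 < n)%N ->
         `| Var (fun s : 'S_n => (S_walk s)%:R : R) - 2 * ln (n%:R : R) | <= C].
Proof.
split.
- by case=> [//|n] _; exact: Expect_S_walk.
- have gap_cvg : (fun n => 2 * (harmonic_gap R n - euler_gamma R)) @ \oo --> (0 : R).
    by rewrite -(mulr0 2); apply: cvgMl_tmp; apply/subr_cvg0/harmonic_gap_cvg.
  apply: cvg_trans gap_cvg; apply: near_eq_cvg; exists 1%N => // -[//|n] _ /=.
  by rewrite Expect_S_walk /harmonic_gap; ring.
- by case=> [//|n] _; exact: Var_S_walk.
- exists 6 => -[//|n] _; rewrite Var_S_walk Cov_L_min_R_min.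
  have := harmonic_gap_ge0 R n; have := harmonic_gap_le1 R n.
  have := Hn2_ge1 R n; have := Hn2_le2 R n.
  by rewrite /harmonic_gap ler_norml => *; apply/andP; split; lra.
Qed.
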